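(* Let $R$ be a D-regularly nil clean ring and let $e\in R$ be an idempotent. Then the corner ring $eRe$ (with identity $e$) is D-regularly nil clean. In particular, if for some positive integer $n$ the matrix ring $\mathbb{M}_n(R)$ is D-regularly nil clean, then $R$ is D-regularly nil clean.
   Context: All rings are associative with identity $1\neq 0$. $Id(R)$ denotes the set of idempotents, $Nil(R)$ the set of nilpotent elements. A ring $R$ is called D-regularly nil clean if for each $a\in R$ there exists an idempotent $e\in aRa\cap Id(R)$ such that $a(1-e)\in Nil(R)$. *)

From HB Require Import structures.
From mathcomp Require Import all_boot all_order all_algebra.
Set Implicit Arguments. Unset Strict Implicit. Unset Printing Implicit Defensive.
Import GRing.Theory.
Local Open Scope ring_scope.

Definition is_nilpotent (R : nzRingType) (x : R) : Prop := exists k : nat, x ^+ k = 0.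

Definition is_idempotent (R : nzRingType) (e : R) : Prop := e * e = e.

Definition D_regularly_nil_clean (R : nzRingType) : Prop :=
  forall a : R, exists e : R,
    (exists x : R, e = a * x * a) /\ is_idempotent e /\ is_nilpotent (a * (1 - e)).

(* The corner ring eRe (identity e) is D-regularly nil clean, written out
   inside R: elements of eRe are the y with y = e*y*e; the identity of eRe is e;
   a(eRe)a = { a*x*a | x in eRe }; multiplication/powers (positive exponents)
   agree with those of R. *)
Definition corner_D_regularly_nil_clean (R : nzRingType) (e : R) : Prop :=
  forall a : R, a = e * a * e -> exists f : R,
    (exists x : R, x = e * x * e /\ f = a * x * a) /\ is_idempotent f /\
    is_nilpotent (a * (e - f)).

From HB Require Import structures.
From mathcomp Require Import all_boot all_order all_algebra.
Set Implicit Arguments. Unset Strict Implicit. Unset Printing Implicit Defensive.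
Local Open Scope ring_scope.
Import GRing.Theory.

(* If a = eae, the idempotent g in aRa supplied by R already has the form
   a (exe) a, and a (e - g) = a (1 - g) because ae = a.  For matrices, the
   corner of M_n(R) at the matrix unit e_00 is the copy { c e_00 } of R, so
   the witnesses found in that corner are read off in the (0,0) entry. *)

Lemma nilpotent_exprS (R : nzRingType) (x : R) :
  is_nilpotent x -> exists k, x ^+ k.+1 = 0.
Proof. by move=> [k xk0]; exists k; rewrite exprS xk0 mulr0. Qed.

Section Corner.
Variables (R : nzRingType) (e : R).
Hypothesis e_idem : is_idempotent e.

Lemma corner_mulr a : a = e * a * e -> a * e = a.
Proof. by move=> ae; rewrite [in LHS]ae -mulrA e_idem -ae. Qed.

Lemma corner_mull a : a = e * a * e -> e * a = a.
Proof. by move=> ae; rewrite [in LHS]ae !mulrA e_idem -ae. Qed.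

Lemma corner_conj x : e * x * e = e * (e * x * e) * e.
Proof. by rewrite !mulrA e_idem -!mulrA e_idem. Qed.

Lemma D_regularly_nil_clean_corner :
  D_regularly_nil_clean R -> corner_D_regularly_nil_clean e.
Proof.
move=> R_dnc a ae.
have [g [[x gx] [g_idem [k agk]]]] := R_dnc a.
exists g; split; last split=> //.
  exists (e * x * e); split; first exact: corner_conj.
  by rewrite gx !mulrA (corner_mulr ae) -!mulrA (corner_mull ae).
by exists k; rewrite -agk !mulrBr (corner_mulr ae) mulr1.
Qed.

End Corner.

Section MatrixUnitCorner.
Variables (R : nzRingType) (n : nat).
Local Notation E := (delta_mx 0 0 : 'M[R]_n.+1).

Lemma delta00_idem : is_idempotent E.
Proof. by rewrite /is_idempotent -mulmxE mul_delta_mx. Qed.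

Lemma delta00_conj (M : 'M[R]_n.+1) : E * M * E = M 0 0 *: E.
Proof.
apply/matrixP=> i j; rewrite -!mulmxE !mxE.
rewrite (bigD1 0) //= big1 ?addr0 => [|k k0]; last first.
  by rewrite [X in _ * X]mxE (negbTE k0) mulr0.
rewrite mxE (bigD1 0) //= big1 ?addr0 => [|l l0]; last first.
  by rewrite [X in X * _]mxE (negbTE l0) andbF mul0r.
rewrite !mxE !eqxx /=.
by case: (i == 0); case: (j == 0); rewrite /= ?mul1r ?mulr1 ?mul0r ?mulr0.
Qed.

Lemma scale_delta00_00 (c : R) : (c *: E) 0 0 = c.
Proof. by rewrite !mxE eqxx mulr1. Qed.

Lemma scale_delta00_inj : injective (fun c : R => c *: E).
Proof. by move=> c d /(congr1 (fun M : 'M_n.+1 => M 0 0)); rewrite !scale_delta00_00. Qed.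

Lemma scale_delta00_mul (c d : R) : (c *: E) * (d *: E) = (c * d) *: E.
Proof.
have dE_E : d *: E * E = d *: E by rewrite -scalerAl delta00_idem.
by rewrite -scalerAl -dE_E mulrA delta00_conj scale_delta00_00 scalerA.
Qed.

Lemma scale_delta00_exp (c : R) k : (c *: E) ^+ k.+1 = c ^+ k.+1 *: E.
Proof.
elim: k => [|k IHk]; first by rewrite !expr1.
by rewrite exprS IHk scale_delta00_mul -exprS.
Qed.

Lemma D_regularly_nil_clean_of_delta00_corner :
  corner_D_regularly_nil_clean E -> D_regularly_nil_clean R.
Proof.
move=> E_dnc a.
have aE : a *: E = E * (a *: E) * E by rewrite delta00_conj scale_delta00_00.
have [F [[X [XE FX]] [F_idem AF_nil]]] := E_dnc _ aE.
have XE00 : X = X 0 0 *: E by rewrite {1}XE delta00_conj.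
have FE : F = (a * X 0 0 * a) *: E by rewrite FX {1}XE00 !scale_delta00_mul.
exists (a * X 0 0 * a); split; first by exists (X 0 0).
split.
  by apply: scale_delta00_inj; move: F_idem; rewrite /is_idempotent FE scale_delta00_mul.
(* A positive exponent is needed: (c e_00)^0 = 1 is not c^0 e_00. *)
have [k AFk0] := nilpotent_exprS AF_nil.
exists k.+1; apply: scale_delta00_inj; move: AFk0.
have -> : E - F = (1 - a * X 0 0 * a) *: E by rewrite FE scalerBl scale1r.
by rewrite scale_delta00_mul scale_delta00_exp scale0r.
Qed.

End MatrixUnitCorner.

Theorem proposition2p3 :
  (forall (R : nzRingType) (e : R),
      D_regularly_nil_clean R -> is_idempotent e -> corner_D_regularly_nil_clean e) /\
  (forall (R : nzRingType) (n : nat),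
      D_regularly_nil_clean ('M[R]_n.+1 : nzRingType) -> D_regularly_nil_clean R).
Proof.
split=> [R e R_dnc e_idem | R n M_dnc].
  exact: D_regularly_nil_clean_corner.
apply: D_regularly_nil_clean_of_delta00_corner.
exact: D_regularly_nil_clean_corner (delta00_idem R n) M_dnc.
Qed.
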